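(* Let $a\in K$ and assume the conjugacy class $\Delta(a)$ is $(\sigma,\delta)$-algebraic. Then a nonzero skew polynomial $P(T)\in K[T;\sigma,\delta]$ belongs to $S(a)$ if and only if $P(c)\neq0$ for all $c\in\Delta(a)$. In particular, $S(a)^{-1}K[T;\sigma,\delta]=Def(a)$.
   Context: Let $K$ be a skew field, $K^*=K\setminus\{0\}$, $\sigma\colon K\to K$ a ring endomorphism and $\delta\colon K\to K$ a $\sigma$-derivation. $R=K[T;\sigma,\delta]$ is the skew polynomial ring with $Ta=\sigma(a)T+\delta(a)$. The $(\sigma,\delta)$-action of $K^*$ on $K$ is ${}^{b}a=\sigma(b)ab^{-1}+\delta(b)b^{-1}$; $\Delta(a)=\{{}^{b}a:b\in K^*\}$. For $P\in R$, $P(a)$ is the unique element of $K$ with $P(T)-P(a)\in R(T-a)$. $\Delta(a)$ is $(\sigma,\delta)$-algebraic if some nonzero $P\in R$ satisfies $P(c)=0$ for all $c\in\Delta(a)$. For a set $Z$ with a $K^*$-action, the skew product of functions $Z\to K$ is $(f\diamond g)(z)=f({}^{g(z)}z)g(z)$ if $g(z)\neq0$, $0$ otherwise; $f$ is skew invertible if some $g$ satisfies $f\diamond g=g\diamond f=1$. $K(T;\sigma,\delta)$ is the division ring of left fractions of $R$; each $f$ has a unique minimal representation $P^{-1}Q$ with $P$ monic of least degree; $f$ is defined at $a$ if $c\mapsto P(c)$ on $\Delta(a)$ is skew invertible. $Def(a)$ is the set of skew rational functions defined at $a$. A left Ore subset of $R$ is a multiplicatively closed $S\subseteq R\setminus\{0\}$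 with $1\in S$ such that $Sr\cap Rs\neq\emptyset$ for all $s\in S,r\in R$. $S(a)$ is the unique left Ore subset of $R$ maximal among left Ore subsets $S$ such that for every $P\in S$ and every monic irreducible $Q$ with $P=Q_1QQ_2$ ($Q_1,Q_2\in R$), $Q^{-1}\in Def(a)$. *)

From HB Require Import structures.
From mathcomp Require Import all_boot all_order all_algebra.
From Stdlib Require Import ClassicalEpsilon.
Set Implicit Arguments. Unset Strict Implicit. Unset Printing Implicit Defensive.
Import Order.TTheory GRing.Theory.
Local Open Scope ring_scope.

Section SkewPoly.
Variable K : unitRingType.
Variable sigma : {rmorphism K -> K}.
Variable delta : K -> K.

(* Skew polynomials are represented by their coefficient lists
   (the carrier {poly K}, sum_i a_i T^i with coefficients on the left);
   the additive structure is that of {poly K}, the multiplication is the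
   skew one, determined by  T a = sigma(a) T + delta(a). *)

(* left multiplication by T : T * (sum_j b_j T^j) = sum_j (sigma b_j T^(j+1) + delta b_j T^j) *)
Definition mulT (Q : {poly K}) : {poly K} := map_poly sigma Q * 'X + map_poly delta Q.

Definition smul (P Q : {poly K}) : {poly K} :=
  \sum_(i < size P) P`_i *: iter i mulT Q.

Definition seval (P : {poly K}) (a : K) : K :=
  epsilon (inhabits 0) (fun c => exists Q : {poly K}, P - c%:P = smul Q ('X - a%:P)).

Definition sdact (b a : K) : K := sigma b * a * b^-1 + delta b * b^-1.

Definition inDelta (a c : K) : Prop := exists b : K, b != 0 /\ c = sdact b a.

Definition sd_algebraic (a : K) : Prop :=
  exists P : {poly K}, P != 0 /\ forall c, inDelta a c -> seval P c = 0.

(* skew product of functions Delta(a) -> K (functions represented on K,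
   only their values on Delta(a) matter) *)
Definition skew_prod (f g : K -> K) (z : K) : K :=
  if g z != 0 then f (sdact (g z) z) * g z else 0.

Definition skew_invertible (a : K) (f : K -> K) : Prop :=
  exists g : K -> K, forall z, inDelta a z ->
    skew_prod f g z = 1 /\ skew_prod g f z = 1.

(* Left fractions P^-1 Q (P <> 0) and their equality in K(T;sigma,delta) *)
Definition frac_eq (PQ PQ' : {poly K} * {poly K}) : Prop :=
  exists u u' : {poly K},
    smul u PQ.1 = smul u' PQ'.1 /\ smul u PQ.1 != 0 /\ smul u PQ.2 = smul u' PQ'.2.

Definition minimal_rep (P Q P0 Q0 : {poly K}) : Prop :=
  P0 \is monic /\ frac_eq (P0, Q0) (P, Q) /\
  forall P1 Q1 : {poly K}, P1 != 0 -> frac_eq (P1, Q1) (P, Q) -> (size P0 <= size P1)%N.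

Definition defined_at (a : K) (P Q : {poly K}) : Prop :=
  exists P0 Q0 : {poly K}, minimal_rep P Q P0 Q0 /\ skew_invertible a (seval P0).

Definition sunit (U : {poly K}) : Prop :=
  exists V : {poly K}, smul U V = 1 /\ smul V U = 1.

Definition sirreducible (Q : {poly K}) : Prop :=
  Q != 0 /\ ~ sunit Q /\ forall A B : {poly K}, Q = smul A B -> sunit A \/ sunit B.

Definition left_Ore (S : {poly K} -> Prop) : Prop :=
  S 1 /\ (forall s, S s -> s != 0) /\
  (forall s t, S s -> S t -> S (smul s t)) /\
  (forall s r, S s -> exists s' r', S s' /\ smul s' r = smul r' s).

Definition irr_factors_defined (a : K) (S : {poly K} -> Prop) : Prop :=
  forall P, S P -> forall Q Q1 Q2 : {poly K},
    Q \is monic -> sirreducible Q -> P = smul (smul Q1 Q) Q2 -> defined_at a Q 1.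

(* S is a maximal left Ore subset with the above property (i.e. S = S(a)) *)
Definition is_Sa (a : K) (S : {poly K} -> Prop) : Prop :=
  left_Ore S /\ irr_factors_defined a S /\
  forall S' : {poly K} -> Prop, left_Ore S' -> irr_factors_defined a S' ->
    (forall P, S P -> S' P) -> forall P, S' P -> S P.

End SkewPoly.

From HB Require Import structures.
From mathcomp Require Import all_boot all_order all_algebra.
From mathcomp Require Import zify.
From Stdlib Require Import ClassicalEpsilon Classical.
Import GRing.Theory.
Local Open Scope ring_scope.
Set Implicit Arguments. Unset Strict Implicit. Unset Printing Implicit Defensive.

(* Since Delta(a) is algebraic, it has a minimal polynomial f: a product of factors X - e with
   e in Delta(a) which right-divides every polynomial vanishing on Delta(a); in particular R f is
   a two-sided ideal. A polynomial s without roots in Delta(a) is right-coprime to f, because every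
   nonconstant right divisor of f has a root in Delta(a). A Bezout relation t s + y f = 1 then makes
   t a skew inverse of s on Delta(a), and c |-> s(c)c permutes Delta(a). With these facts the
   root-free polynomials are seen to form a left Ore set whose monic irreducible factors are
   defined at a, and any such set consists of root-free polynomials; so they form S(a).
   Finally, the minimal denominator of a fraction with a root-free denominator right-divides it,
   hence is root-free, which identifies S(a)^-1 R with Def(a). *)

Section SkewPolynomials.
Variable K : unitRingType.
Hypothesis K_skewfield : forall x : K, x != 0 -> x \is a GRing.unit.
Variable sigma : {rmorphism K -> K}.
Variable delta : K -> K.
Hypothesis delta_add : forall x y : K, delta (x + y) = delta x + delta y.
Hypothesis delta_mul : forall x y : K, delta (x * y) = sigma x * delta y + delta x * y.

Implicit Types (d f g h l m p q r s t u x y A B P Q W : {poly K}) (b c e k : K).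

Local Notation mT := (mulT sigma delta).
Local Notation "P ** Q" := (smul sigma delta P Q) (at level 40, left associativity).

(** * Skew polynomial arithmetic *)

Lemma mulr_neq0 b c : b != 0 -> c != 0 -> b * c != 0.
Proof.
move=> hb; apply: contraNneq => bc0; apply/eqP.
by apply: (mulrI (K_skewfield hb)); rewrite bc0 mulr0.
Qed.

Lemma mulIf_eq0 b c : c != 0 -> b * c = 0 -> b = 0.
Proof. by move=> hc bc0; apply: (mulIr (K_skewfield hc)); rewrite bc0 mul0r. Qed.

Lemma sigma_neq0 b : b != 0 -> sigma b != 0.
Proof.
by move=> hb; apply: contraTneq (rmorph_unit sigma (K_skewfield hb)) => ->; rewrite unitr0.
Qed.

Lemma iter_sigma_neq0 i b : b != 0 -> iter i sigma b != 0.
Proof. by move=> hb; elim: i => //= i; apply: sigma_neq0. Qed.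

Fact delta_is_zmod_morphism : zmod_morphism delta.
Proof. by move=> b c; apply: (addIr (delta c)); rewrite -delta_add !subrK. Qed.
HB.instance Definition _ := GRing.isZmodMorphism.Build K K delta delta_is_zmod_morphism.

Lemma delta1 : delta 1 = 0.
Proof.
have := delta_mul 1 1; rewrite !mulr1 rmorph1 mul1r => h.
by apply: (addrI (delta 1)); rewrite addr0 -h.
Qed.

Fact mulT_is_zmod_morphism : zmod_morphism mT.
Proof. by move=> p q; rewrite /mulT !raddfB mulrBl addrACA opprD. Qed.
HB.instance Definition _ := GRing.isZmodMorphism.Build _ _ mT mulT_is_zmod_morphism.

Fact iterT_is_zmod_morphism i : zmod_morphism (iter i mT).
Proof. by move=> p q; elim: i => //= i ->; rewrite raddfB. Qed.
HB.instance Definition _ i := GRing.isZmodMorphism.Build _ _ (iter i mT) (iterT_is_zmod_morphism i).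

Lemma coef_mulT q j : (mT q)`_j = (if j is j'.+1 then sigma q`_j' else 0) + delta q`_j.
Proof.
rewrite /mulT coefD coefMX coef_map_id0 ?raddf0 // coef_map_id0 ?rmorph0 ?raddf0 //.
by case: j.
Qed.

Lemma mulTZ k q : mT (k *: q) = sigma k *: mT q + delta k *: q.
Proof.
apply/polyP => j; rewrite !(coef_mulT, coefD, coefZ) delta_mul.
by case: j => [|j] /=; rewrite ?mulr0 ?add0r // coefZ rmorphM mulrDr addrA.
Qed.

Lemma mulT_Xn i : mT 'X^i = 'X^(i.+1).
Proof.
apply/polyP => j; rewrite coef_mulT !coefXn raddfMn /= delta1 mul0rn addr0.
by case: j => [|j] //=; rewrite coefXn rmorph_nat eqSS.
Qed.

Lemma iterT1 i : iter i mT 1 = 'X^i.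
Proof. by elim: i => [|i IH] /=; rewrite ?expr0 // IH mulT_Xn. Qed.

Lemma size_mulT_leq q : (size (mT q) <= (size q).+1)%N.
Proof.
apply/leq_sizeP => -[|j] //= hj; rewrite coef_mulT !nth_default ?rmorph0 ?raddf0 ?addr0 //.
exact: ltnW.
Qed.

Lemma size_mulT q : q != 0 ->
  size (mT q) = (size q).+1 /\ lead_coef (mT q) = sigma (lead_coef q).
Proof.
move=> hq; have hs : (0 < size q)%N by rewrite size_poly_gt0.
have top : (mT q)`_(size q) = sigma (lead_coef q).
  rewrite coef_mulT lead_coefE (nth_default _ (leqnn (size q))) raddf0 addr0.
  by case: (size q) hs.
have hsz : size (mT q) = (size q).+1.
  apply/anti_leq; rewrite size_mulT_leq /= ltnNge.
  have lq : lead_coef q != 0 by rewrite lead_coef_eq0.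
  apply: contraL (sigma_neq0 lq) => /leq_sizeP/(_ _ (leqnn _)).
  by rewrite top => ->; rewrite eqxx.
by rewrite lead_coefE hsz.
Qed.

Lemma size_iterT i q : q != 0 ->
  size (iter i mT q) = (size q + i)%N /\ lead_coef (iter i mT q) = iter i sigma (lead_coef q).
Proof.
move=> hq; elim: i => [|i [IH1 IH2]] /=; first by rewrite addn0.
have hq' : iter i mT q != 0 by rewrite -size_poly_gt0 IH1 addn_gt0 size_poly_gt0 hq.
by have [-> ->] := size_mulT hq'; rewrite IH1 IH2 addnS.
Qed.

Lemma lreg_neq0 k : k != 0 -> GRing.lreg k.
Proof. by move/K_skewfield/mulrI. Qed.

Lemma smulE n P Q : (size P <= n)%N -> P ** Q = \sum_(i < n) P`_i *: iter i mT Q.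
Proof.
move=> hn; rewrite /smul (big_ord_widen _ (fun i => P`_i *: iter i mT Q) hn) big_mkcond /=.
apply: eq_bigr => i _; case: ifP => // /negbT; rewrite -leqNgt => h.
by rewrite nth_default // scale0r.
Qed.

Fact smul_is_zmod_morphism P : zmod_morphism (smul sigma delta P).
Proof. by move=> Q Q'; rewrite /smul -sumrB; apply: eq_bigr => i _; rewrite raddfB scalerBr. Qed.
HB.instance Definition _ P :=
  GRing.isZmodMorphism.Build _ _ (smul sigma delta P) (smul_is_zmod_morphism P).

Lemma smulDl P P' Q : (P + P') ** Q = P ** Q + P' ** Q.
Proof.
set n := maxn (size P) (size P').
rewrite (@smulE n) ?size_polyD // (@smulE n P) ?leq_maxl // (@smulE n P') ?leq_maxr //.
by rewrite -big_split; apply: eq_bigr => i _; rewrite coefD scalerDl.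
Qed.

Lemma smul0l Q : 0 ** Q = 0.
Proof. by rewrite /smul size_poly0 big_ord0. Qed.

Lemma smulZl k P Q : (k *: P) ** Q = k *: (P ** Q).
Proof.
rewrite (@smulE (size P)) ?size_scale_leq // /smul scaler_sumr.
by apply: eq_bigr => i _; rewrite coefZ scalerA.
Qed.

Lemma smulNl P Q : (- P) ** Q = - (P ** Q).
Proof. by rewrite -scaleN1r smulZl scaleN1r. Qed.

Lemma smulBl P P' Q : (P - P') ** Q = P ** Q - P' ** Q.
Proof. by rewrite smulDl smulNl. Qed.

Lemma smul_suml (I : Type) (r : seq I) (F : I -> {poly K}) Q :
  (\sum_(i <- r) F i) ** Q = \sum_(i <- r) (F i ** Q).
Proof. by apply: (big_morph (smul sigma delta ^~ Q)) => [P P'|]; rewrite ?smulDl ?smul0l. Qed.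

Lemma smulCl k Q : k%:P ** Q = k *: Q.
Proof. by rewrite (@smulE 1) ?size_polyC ?leq_b1 // big_ord1 coefC. Qed.

Lemma smul1l Q : 1 ** Q = Q.
Proof. by rewrite -polyC1 smulCl scale1r. Qed.

Lemma smulXnl i Q : 'X^i ** Q = iter i mT Q.
Proof.
rewrite (@smulE i.+1) ?size_polyXn // big_ord_recr /= coefXn eqxx scale1r big1 ?add0r //.
by move=> j _; rewrite coefXn (ltn_eqF (ltn_ord j)) scale0r.
Qed.

Lemma smulXl Q : 'X ** Q = mT Q.
Proof. by rewrite -(expr1 'X) smulXnl. Qed.

Lemma smul_mulTl P Q : mT P ** Q = mT (P ** Q).
Proof.
rewrite (@smulE (size P).+1) ?size_mulT_leq // /smul raddf_sum /=.
under eq_bigr do rewrite coef_mulT scalerDl.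
rewrite big_split /= big_ord_recl /= scale0r add0r big_ord_recr /= nth_default //.
by rewrite raddf0 scale0r addr0 -big_split; apply: eq_bigr => i _; rewrite !add0n mulTZ.
Qed.

Lemma smulA P Q U : P ** Q ** U = P ** (Q ** U).
Proof.
have smul_iterTl i R : iter i mT R ** U = iter i mT (R ** U).
  by elim: i => //= i <-; rewrite smul_mulTl.
rewrite [P ** Q]/smul smul_suml [P ** _]/smul.
by apply: eq_bigr => i _; rewrite smulZl smul_iterTl.
Qed.

Lemma smul1r P : P ** 1 = P.
Proof. by rewrite /smul; under eq_bigr do rewrite iterT1; rewrite -poly_def coefK. Qed.

Lemma size_smul P Q : P != 0 -> Q != 0 ->
  size (P ** Q) = (size P + size Q).-1 /\
  lead_coef (P ** Q) = lead_coef P * iter (size P).-1 sigma (lead_coef Q).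
Proof.
move=> hP hQ; have hQs : (0 < size Q)%N by rewrite size_poly_gt0.
have hs : size P = (size P).-1.+1 by rewrite prednK // size_poly_gt0.
set m := (size P).-1 in hs *.
have hPm : GRing.lreg P`_m by apply: lreg_neq0; rewrite /m -lead_coefE lead_coef_eq0.
have [hB1 hB2] := size_iterT m hQ.
have low : (size (\sum_(i < m) P`_i *: iter i mT Q)%R < size (P`_m *: iter m mT Q))%N.
  rewrite lreg_size // hB1 -[(size Q + m)%N]prednK ?addn_gt0 ?hQs // ltnS.
  apply: (big_ind (fun p => (size p <= (size Q + m).-1)%N)); first by rewrite size_poly0.
    by move=> x y hx hy; apply: leq_trans (size_polyD _ _) _; rewrite geq_max hx hy.
  move=> i _; apply: leq_trans (size_scale_leq P`_i (iter i mT Q)) _.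
  by have [-> _] := size_iterT i hQ; rewrite -ltnS prednK ?addn_gt0 ?hQs // ltn_add2l.
rewrite (@smulE m.+1) ?hs // big_ord_recr /= addrC.
rewrite (size_polyDl low) (lead_coefDl low) lreg_size // lead_coef_lreg // hB1 hB2.
by split; [exact: addnC | rewrite [lead_coef P]lead_coefE].
Qed.

Lemma smul_neq0 P Q : P != 0 -> Q != 0 -> P ** Q != 0.
Proof.
move=> hP hQ; have [h _] := size_smul hP hQ.
by rewrite -size_poly_gt0 h -subn1 subn_gt0 -addn1 leq_add // size_poly_gt0.
Qed.

Lemma smul_eq0 P Q : P ** Q = 0 -> P = 0 \/ Q = 0.
Proof.
have [-> | hP] := eqVneq P 0; first by left.
have [-> | hQ] := eqVneq Q 0; first by right.
by move/eqP; rewrite (negbTE (smul_neq0 hP hQ)).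
Qed.

Lemma smulI u P Q : u != 0 -> u ** P = u ** Q -> P = Q.
Proof.
move=> hu /eqP; rewrite -subr_eq0 -raddfB => /eqP /smul_eq0 [/eqP|/eqP].
  by rewrite (negbTE hu).
by rewrite subr_eq0 => /eqP.
Qed.

Lemma size_smul_ger P Q : P != 0 -> Q != 0 -> (size Q <= size (P ** Q))%N.
Proof.
move=> hP hQ; have [-> _] := size_smul hP hQ.
have : (0 < size P)%N by rewrite size_poly_gt0.
by case: (size P) => // n _; rewrite addSn /= leq_addl.
Qed.

Lemma size_smul_gel P Q : P != 0 -> Q != 0 -> (size P <= size (P ** Q))%N.
Proof.
move=> hP hQ; have [-> _] := size_smul hP hQ.
have : (0 < size Q)%N by rewrite size_poly_gt0.
by case: (size Q) => // n _; rewrite addnS /= leq_addr.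
Qed.

Lemma rdivp_exists P B : B != 0 -> exists q r, P = q ** B + r /\ (size r < size B)%N.
Proof.
move=> hB; elim: (size P) {-2}P (leqnn (size P)) => [|n IH] {}P hP.
  by exists 0, P; rewrite smul0l add0r (leq_ltn_trans hP) // size_poly_gt0.
have [ltPB|leBP] := ltnP (size P) (size B); first by exists 0, P; rewrite smul0l add0r.
have hP0 : P != 0 by rewrite -size_poly_gt0 (leq_trans _ leBP) // size_poly_gt0.
set d := (size P - size B)%N.
have lB : iter d sigma (lead_coef B) != 0 by apply: iter_sigma_neq0; rewrite lead_coef_eq0.
set c := lead_coef P * (iter d sigma (lead_coef B))^-1.
have [sBd lBd] := size_iterT d hB.
have cancel_lead : (size (P - c *: 'X^d ** B)%R < size P)%N.
  have hs : size P = (size P).-1.+1 by rewrite prednK // size_poly_gt0.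
  rewrite [X in (_ < X)%N]hs ltnS; apply/leq_sizeP => j hj.
  rewrite smulZl smulXnl coefB coefZ.
  have sPd : size (iter d mT B) = size P by rewrite sBd /d addnC subnK.
  case: (ltngtP j (size P).-1) => [|Pj|->]; first by rewrite ltnNge hj.
    by rewrite !nth_default ?mulr0 ?subrr // ?sPd hs.
  by rewrite -lead_coefE -sPd -lead_coefE lBd /c divrK ?subrr ?K_skewfield.
have [q [r [e hr]]] := IH _ (leq_trans cancel_lead hP).
by exists (q + c *: 'X^d), r; rewrite smulDl addrAC -e subrK.
Qed.

(** * Evaluation *)

Local Notation ev := (seval sigma delta).
Local Notation act := (sdact sigma delta).

Lemma XsubC_neq0 c : ('X - c%:P : {poly K}) != 0.
Proof. by rewrite -size_poly_gt0 size_XsubC. Qed.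

Lemma sevalP P c : exists Q, P - (ev P c)%:P = Q ** ('X - c%:P).
Proof.
apply: (epsilon_spec (inhabits 0) (fun k => exists Q, P - k%:P = Q ** ('X - c%:P))).
have [q [r [-> hr]]] := rdivp_exists P (XsubC_neq0 c).
rewrite size_XsubC in hr; exists r`_0, q.
by rewrite {1}(size1_polyC hr) addrK.
Qed.

Lemma seval_unique P c k Q : P - k%:P = Q ** ('X - c%:P) -> ev P c = k.
Proof.
move=> hQ; have [Q' hQ'] := sevalP P c.
have e : (k - ev P c)%:P = (Q' - Q) ** ('X - c%:P).
  by rewrite smulBl -hQ' -hQ polyCB opprB [RHS]addrC addrA subrK.
have [Q0 | hQ0] := eqVneq (Q' - Q) 0.
  by move: e; rewrite Q0 smul0l => /eqP; rewrite polyC_eq0 subr_eq0 => /eqP.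
have := size_smul_ger hQ0 (XsubC_neq0 c); rewrite -e size_XsubC size_polyC.
by case: (_ != _).
Qed.

Lemma seval_mulXsubC Q c : ev (Q ** ('X - c%:P)) c = 0.
Proof. by apply: (seval_unique (Q := Q)); rewrite subr0. Qed.

Lemma sevalC k c : ev k%:P c = k.
Proof. by apply: (seval_unique (Q := 0)); rewrite subrr smul0l. Qed.

Lemma seval1 c : ev 1 c = 1.
Proof. by rewrite -polyC1 sevalC. Qed.

Lemma sevalD P Q c : ev (P + Q) c = ev P c + ev Q c.
Proof.
have [Q1 h1] := sevalP P c; have [Q2 h2] := sevalP Q c.
by apply: (seval_unique (Q := Q1 + Q2)); rewrite smulDl -h1 -h2 polyCD opprD addrACA.
Qed.

Lemma sevalZ k P c : ev (k *: P) c = k * ev P c.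
Proof.
have [Q hQ] := sevalP P c.
by apply: (seval_unique (Q := k *: Q)); rewrite smulZl -hQ scalerBr polyCM mul_polyC.
Qed.

Lemma sevalB P Q c : ev (P - Q) c = ev P c - ev Q c.
Proof. by rewrite sevalD -scaleN1r sevalZ mulN1r. Qed.

Lemma seval_eq0_factor P c : ev P c = 0 -> exists Q, P = Q ** ('X - c%:P).
Proof. by move=> h; have [Q hQ] := sevalP P c; exists Q; rewrite -hQ h subr0. Qed.

Lemma sevalXsubC e c : ev ('X - e%:P) c = c - e.
Proof. by apply: (seval_unique (Q := 1)); rewrite smul1l polyCB opprB addrA subrK. Qed.

Lemma sdact1 c : act 1 c = c.
Proof. by rewrite /sdact rmorph1 mul1r invr1 !mulr1 delta1 addr0. Qed.

Lemma sdactM b k c : b != 0 -> k != 0 -> act b (act k c) = act (b * k) c.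
Proof.
move=> hb hk; rewrite /sdact rmorphM delta_mul invrM ?K_skewfield //.
by rewrite !mulrDl !mulrDr !mulrA (mulrK (K_skewfield hk)) mulrDl addrA.
Qed.

Lemma sdactK k c : k != 0 -> act k^-1 (act k c) = c.
Proof. by move=> hk; rewrite sdactM ?invr_eq0 // mulVr ?K_skewfield // sdact1. Qed.

Lemma XsubC_smulC k c : k != 0 -> ('X - (act k c)%:P) ** k%:P = sigma k *: ('X - c%:P).
Proof.
move=> hk; have e : act k c * k = sigma k * c + delta k.
  by rewrite /sdact mulrDl !divrK ?K_skewfield.
have map_deltaC : map_poly delta k%:P = (delta k)%:P.
  by apply/polyP => i; rewrite coef_map_id0 ?raddf0 // !coefC; case: (i == 0)%N; rewrite ?raddf0.
rewrite smulBl smulXl smulCl /mulT map_polyC map_deltaC /= -mul_polyC -polyCM e.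
by rewrite polyCD scalerBr -!mul_polyC -polyCM (addrC (sigma k * c)%:P) opprD addrA addrK.
Qed.

Lemma seval_smulC P k c : k != 0 -> ev (P ** k%:P) c = ev P (act k c) * k.
Proof.
move=> hk; have [Q hQ] := sevalP P (act k c).
have hP : P = Q ** ('X - (act k c)%:P) + (ev P (act k c))%:P by rewrite -hQ subrK.
apply: (seval_unique (Q := Q ** (sigma k)%:P)).
rewrite {1}hP smulDl smulA XsubC_smulC // smulCl polyCM mul_polyC addrK.
by rewrite smulA smulCl.
Qed.

Lemma seval_smul P Q c : ev (P ** Q) c = skew_prod sigma delta (ev P) (ev Q) c.
Proof.
rewrite /skew_prod; have [Q1 hQ1] := sevalP Q c.
have hQ : Q = Q1 ** ('X - c%:P) + (ev Q c)%:P by rewrite -hQ1 subrK.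
rewrite {1}hQ raddfD /= -smulA sevalD seval_mulXsubC add0r.
have [->|h] := eqVneq (ev Q c) 0; last by rewrite seval_smulC.
by rewrite polyC0 raddf0 -polyC0 sevalC.
Qed.

Lemma seval_smul_eq0 P Q c : ev Q c = 0 -> ev (P ** Q) c = 0.
Proof. by move=> h; rewrite seval_smul /skew_prod h eqxx. Qed.

Section Steinitz.
Variable V : lmodType K.

Lemma span_dependent (J I : seq nat) (u w : nat -> V) (A : nat -> nat -> K) :
  uniq I -> (size J < size I)%N ->
  (forall i, i \in I -> u i = \sum_(j <- J) A i j *: w j) ->
  exists kk : nat -> K, (exists2 i, i \in I & kk i != 0) /\ \sum_(i <- I) kk i *: u i = 0.
Proof.
elim: J I u A => [|j0 J IH] I u A uI ltJI hu.
  case: I uI ltJI hu => [|i0 I] // _ _ hu; exists (fun _ => 1).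
  split; first by exists i0; rewrite ?mem_head ?oner_neq0.
  by rewrite big_seq big1 // => i hi; rewrite hu // big_nil scaler0.
have [[i0 hi0 Ai0] | A0] := classic (exists2 i0, i0 \in I & A i0 j0 != 0); last first.
  apply: (IH I u A) => // [|i hi]; first exact: ltn_trans ltJI.
  rewrite hu // big_cons.
  have -> : A i j0 = 0 by apply/eqP/contraT => Aij; exfalso; apply: A0; exists i.
  by rewrite scale0r add0r.
(* eliminate [w j0] using the combination [u i0] *)
set al := A i0 j0; set I' := rem i0 I.
set u' := fun i => u i - (A i j0 / al) *: u i0.
set A' := fun i j => A i j - A i j0 / al * A i0 j.
have hu' i : i \in I' -> u' i = \sum_(j <- J) A' i j *: w j.
  move=> /mem_rem hi; rewrite /u' (hu i hi) (hu i0 hi0) !big_cons scalerDr scalerA.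
  rewrite divrK ?K_skewfield // opprD addrACA subrr add0r scaler_sumr -sumrB.
  by apply: eq_bigr => j _; rewrite /A' scalerA scalerBl.
have ltJI' : (size J < size I')%N by rewrite size_rem //; case: (size I) ltJI.
have [kk [[i1 hi1 ki1] hsum]] := IH I' u' A' (rem_uniq _ uI) ltJI' hu'.
set k0 := \sum_(i <- I') kk i * (A i j0 / al).
have notin_i0 i : i \in I' -> i != i0 by rewrite mem_rem_uniq // => /andP [].
exists (fun i => if i == i0 then - k0 else kk i); split.
  by exists i1; rewrite ?(mem_rem hi1) ?(negbTE (notin_i0 _ hi1)).
rewrite (perm_big _ (perm_to_rem hi0)) big_cons eqxx /=.
rewrite (eq_big_seq (fun i => kk i *: u i)); last by move=> i /notin_i0 /negbTE ->.
have -> : \sum_(i <- I') kk i *: u i = \sum_(i <- I') kk i *: u' i + k0 *: u i0.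
  rewrite scaler_suml -big_split /=; apply: eq_bigr => i _.
  by rewrite /u' scalerBr scalerA subrK.
by rewrite hsum add0r scaleNr addNr.
Qed.

Lemma span_drop (J : seq nat) (w : nat -> V) (c A : nat -> K) j0 :
  j0 \in J -> c j0 != 0 -> \sum_(j <- J) c j *: w j = 0 ->
  \sum_(j <- J) A j *: w j = \sum_(j <- rem j0 J) (A j - A j0 / c j0 * c j) *: w j.
Proof.
move=> hj0 cj0; rewrite !(perm_big _ (perm_to_rem hj0)) !big_cons /= => /eqP.
rewrite addr_eq0 => /eqP e.
have -> : A j0 *: w j0 = (A j0 / c j0) *: (c j0 *: w j0) by rewrite scalerA divrK ?K_skewfield.
rewrite e scalerN scaler_sumr -sumrN -big_split /=; apply: eq_bigr => j _.
by rewrite scalerA scalerBl addrC.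
Qed.
End Steinitz.

(** * Right division, Bezout relations and common left multiples *)

Definition rdvds d p := exists q, p = q ** d.

Lemma rdvds_size d p : p != 0 -> rdvds d p -> (size d <= size p)%N.
Proof.
move=> p0 [q e]; have q0 : q != 0 by apply: contraNneq p0 => q0; rewrite e q0 smul0l.
have d0 : d != 0 by apply: contraNneq p0 => d0; rewrite e d0 raddf0.
by rewrite e size_smul_ger.
Qed.

Lemma gcrd_exists g h : g != 0 ->
  exists d x y, [/\ d = x ** g + y ** h, d != 0, rdvds d g & rdvds d h].
Proof.
elim: (size h) {-2}h (leqnn (size h)) g => [|n IH] {}h hh g g0.
  have -> : h = 0 by apply/eqP; rewrite -size_poly_eq0 -leqn0.
  exists g, 1, 0; rewrite smul1l smul0l addr0; split => //; first by exists 1; rewrite smul1l.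
  by exists 0; rewrite smul0l.
have [-> | h0] := eqVneq h 0.
  exists g, 1, 0; rewrite smul1l smul0l addr0; split => //; first by exists 1; rewrite smul1l.
  by exists 0; rewrite smul0l.
have [q [r [e lt_rh]]] := rdivp_exists g h0.
have [d [x [y [hd d0 [q1 hq1] [q2 hq2]]]]] := IH r (leq_trans lt_rh hh) h h0.
exists d, y, (x - y ** q); split => //.
- by rewrite hd e raddfD /= smulBl -smulA [RHS]addrC addrA subrK.
- by exists (q ** q1 + q2); rewrite smulDl smulA -hq1 -hq2.
- by exists q1.
Qed.

Lemma ex_minsize (Pr : {poly K} -> Prop) : (exists2 p, Pr p & p != 0) ->
  exists l, [/\ Pr l, l != 0 & forall p, Pr p -> p != 0 -> (size l <= size p)%N].
Proof.
move=> [p Pp p0]; elim: (size p) {-2}p (leqnn (size p)) Pp p0 => [|n IH] {}p hp Pp p0.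
  by move: p0; rewrite -size_poly_eq0 -leqn0 hp.
have [[p' [Pp' p'0] lt_p'p] | no_smaller] :=
  classic (exists2 p', Pr p' /\ p' != 0 & (size p' < size p)%N).
  by apply: (IH p') => //; rewrite -ltnS (leq_trans lt_p'p).
exists p; split => // p' Pp' p'0; rewrite leqNgt; apply/negP => lt_p'p.
by apply: no_smaller; exists p'.
Qed.

Section RightRemainder.
Variable B : {poly K}.
Hypothesis B_neq0 : B != 0.

Definition srdivmodp P : {poly K} * {poly K} :=
  epsilon (inhabits (0, 0)) (fun qr => P = qr.1 ** B + qr.2 /\ (size qr.2 < size B)%N).
Definition srdivp P := (srdivmodp P).1.
Definition srmodp P := (srdivmodp P).2.

Lemma srdivmodpP P : P = srdivp P ** B + srmodp P /\ (size (srmodp P) < size B)%N.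
Proof.
apply: (epsilon_spec (inhabits (0, 0))
  (fun qr : {poly K} * {poly K} => P = qr.1 ** B + qr.2 /\ (size qr.2 < size B)%N)).
by have [q [r h]] := rdivp_exists P B_neq0; exists (q, r).
Qed.

Lemma srmodp_unique P q r : P = q ** B + r -> (size r < size B)%N -> srmodp P = r.
Proof.
move=> eP lt_rB; have [eP' lt_r'B] := srdivmodpP P.
set q' := srdivp P in eP'; set r' := srmodp P in eP' lt_r'B *.
have e0 : q ** B = q' ** B + r' - r by rewrite -eP' eP addrK.
have e : (q - q') ** B = r' - r by rewrite smulBl e0 addrAC (addrC (q' ** B)) addrK.
have [q0 | q0] := eqVneq (q - q') 0.
  by move: e; rewrite q0 smul0l => /eqP; rewrite eq_sym subr_eq0 => /eqP.
have := size_smul_ger q0 B_neq0; rewrite e leqNgt => /negP; case.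
by rewrite (leq_ltn_trans (size_polyD _ _)) // size_polyN gtn_max lt_r'B.
Qed.

Lemma srmodpD P Q : srmodp (P + Q) = srmodp P + srmodp Q.
Proof.
have [eP ltP] := srdivmodpP P; have [eQ ltQ] := srdivmodpP Q.
apply: (srmodp_unique (q := srdivp P + srdivp Q)).
  by rewrite {1}eP {1}eQ smulDl addrACA.
by rewrite (leq_ltn_trans (size_polyD _ _)) // gtn_max ltP ltQ.
Qed.

Lemma srmodpZ k P : srmodp (k *: P) = k *: srmodp P.
Proof.
have [eP ltP] := srdivmodpP P.
apply: (srmodp_unique (q := k *: srdivp P)); first by rewrite {1}eP scalerDr smulZl.
exact: leq_ltn_trans (size_scale_leq _ _) ltP.
Qed.

Lemma srmodp_small r : (size r < size B)%N -> srmodp r = r.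
Proof. by apply: (srmodp_unique (q := 0)); rewrite smul0l add0r. Qed.

Lemma srmodp_sum (I : Type) (s : seq I) (F : I -> {poly K}) :
  srmodp (\sum_(i <- s) F i) = \sum_(i <- s) srmodp (F i).
Proof.
apply: (big_morph srmodp srmodpD).
by rewrite srmodp_small // size_poly0 size_poly_gt0.
Qed.

Lemma srmodp_addl_mul P q : srmodp (q ** B + P) = srmodp P.
Proof.
have [eP ltP] := srdivmodpP P.
by apply: (srmodp_unique (q := q + srdivp P)); rewrite // {1}eP smulDl addrA.
Qed.

Lemma srmodp_mul q : srmodp (q ** B) = 0.
Proof. by rewrite -[q ** B]addr0 srmodp_addl_mul srmodp_small // size_poly0 size_poly_gt0. Qed.

Lemma srmodp_eq0P P : srmodp P = 0 <-> rdvds B P.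
Proof.
split => [P0 | [q ->]]; last exact: srmodp_mul.
by exists (srdivp P); rewrite {1}(proj1 (srdivmodpP P)) P0 addr0.
Qed.
End RightRemainder.

Local Notation Inat n := (index_iota 0 n).

Lemma poly_Inat p n : (size p <= n)%N -> p = \sum_(i <- Inat n) p`_i *: 'X^i.
Proof.
move=> hp; rewrite big_mkord -poly_def; apply/polyP => j; rewrite coef_poly.
by case: ifP => // /negbT; rewrite -leqNgt => h; rewrite nth_default // (leq_trans hp).
Qed.

Lemma coef_sum_Inat (kk : nat -> K) n j :
  (j < n)%N -> (\sum_(i <- Inat n) kk i *: 'X^i)`_j = kk j.
Proof. by move=> hj; rewrite big_mkord -poly_def coef_poly hj. Qed.

Lemma monomials_free (kk : nat -> K) n :
  \sum_(i <- Inat n) kk i *: 'X^i = 0 -> forall i, i \in Inat n -> kk i = 0.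
Proof. by move=> h i; rewrite mem_iota add0n subn0 => /coef_sum_Inat <-; rewrite h coef0. Qed.

(* The [deg y + 1] remainders [X^i x mod y], i <= deg y, lie in a space of dimension [deg y]. *)
Lemma common_left_multiple x y : y != 0 -> exists mu nu, mu != 0 /\ mu ** x = nu ** y.
Proof.
move=> y0; set d := (size y).-1.
have hsy : size y = d.+1 by rewrite /d prednK // size_poly_gt0.
set u := fun i => srmodp y ('X^i ** x).
have hu i : i \in Inat d.+1 -> u i = \sum_(j <- Inat d) (u i)`_j *: 'X^j.
  by move=> _; apply: poly_Inat; rewrite -ltnS -hsy; case: (srdivmodpP y0 ('X^i ** x)).
have hs : (size (Inat d) < size (Inat d.+1))%N by rewrite /index_iota !size_iota !subn0.
have [kk [[i1 hi1 ki1] hsum]] := span_dependent (iota_uniq _ _) hs hu.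
exists (\sum_(i <- Inat d.+1) kk i *: 'X^i).
exists (\sum_(i <- Inat d.+1) kk i *: srdivp y ('X^i ** x)).
split; first by apply: contra ki1 => /eqP /monomials_free ->.
rewrite !smul_suml -[RHS]addr0 -[X in _ + X]hsum -big_split /=; apply: eq_bigr => i _.
by rewrite !smulZl -scalerDr /u -(proj1 (srdivmodpP y0 _)).
Qed.

Lemma size1_polyC_neq0 d : (size d <= 1)%N -> d != 0 -> d = (d`_0)%:P /\ d`_0 != 0.
Proof.
move=> d1 d0; have ed := size1_polyC d1; split => //.
by apply: contraNneq d0 => d00; rewrite ed d00.
Qed.

Lemma coprime_bezout g h : g != 0 ->
  (forall d, rdvds d g -> rdvds d h -> (size d <= 1)%N) -> exists x y, x ** g + y ** h = 1.
Proof.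
move=> g0 coprime; have [d [x [y [ed d0 dg dh]]]] := gcrd_exists h g0.
have [dC k0] := size1_polyC_neq0 (coprime d dg dh) d0; set k := d`_0 in dC k0.
exists (k^-1 *: x), (k^-1 *: y).
by rewrite !smulZl -scalerDr -ed dC scale_polyC mulVr ?K_skewfield.
Qed.

Lemma linear_root g : size g = 2%N -> exists c, ev g c = 0.
Proof.
move=> sg; have g1 : g`_1 != 0.
  by have := lead_coef_eq0 g; rewrite lead_coefE sg => ->; rewrite -size_poly_eq0 sg.
have eg : g = (g`_0)%:P + g`_1 *: 'X.
  apply/polyP => -[|[|j]]; rewrite coefD coefC coefZ coefX ?mulr0 ?addr0 ?mulr1 ?add0r //.
  by rewrite nth_default // sg.
have sevalX c : ev 'X c = c by have := sevalXsubC 0 c; rewrite !subr0.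
exists (- ((g`_1)^-1 * g`_0)).
by rewrite {1}eg sevalD sevalC sevalZ sevalX mulrN mulVKr ?K_skewfield // subrr.
Qed.

Lemma minsize_rdvds (L : {poly K} -> Prop) l :
  (forall x y, L x -> L y -> L (x - y)) -> (forall q x, L x -> L (q ** x)) ->
  L l -> l != 0 -> (forall p, L p -> p != 0 -> (size l <= size p)%N) ->
  forall x, L x -> rdvds l x.
Proof.
move=> LB LM Ll l0 lmin x Lx; have [q [r [ex lt_rl]]] := rdivp_exists x l0.
have [r0 | r0] := eqVneq r 0; first by exists q; rewrite ex r0 addr0.
have er : r = x - q ** l by rewrite ex addrAC subrr add0r.
have Lr : L r by rewrite er; apply: LB => //; apply: LM.
by move: (lmin r Lr r0); rewrite leqNgt lt_rl.
Qed.

Lemma size1_sunit A : size A = 1%N -> sunit sigma delta A.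
Proof.
move=> sA; have A0 : A != 0 by rewrite -size_poly_gt0 sA.
have [eA k0] := size1_polyC_neq0 (eq_leq sA) A0; set k := A`_0 in eA k0.
rewrite eA; exists (k^-1)%:P.
by rewrite !smulCl !scale_polyC mulrV ?mulVr ?K_skewfield // polyC1.
Qed.

Lemma XsubC_sirreducible c : sirreducible sigma delta ('X - c%:P).
Proof.
split; first exact: XsubC_neq0.
split.
  move=> [V [XV _]].
  have V0 : V != 0 by apply: contra_neq (oner_neq0 {poly K}) => V0; rewrite -XV V0 raddf0.
  by have := size_smul_gel (XsubC_neq0 c) V0; rewrite XV size_poly1 size_XsubC.
move=> A B e.
have A0 : A != 0 by apply: contra_neq (XsubC_neq0 c) => A0; rewrite e A0 smul0l.
have B0 : B != 0 by apply: contra_neq (XsubC_neq0 c) => B0; rewrite e B0 raddf0.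
have [sAB _] := size_smul A0 B0; rewrite -e size_XsubC -subn1 natn in sAB.
have sA : (0 < size A)%N by rewrite size_poly_gt0.
have sB : (0 < size B)%N by rewrite size_poly_gt0.
by have [sA1 | sA1] := eqVneq (size A) 1%N; [left | right]; apply: size1_sunit => //; lia.
Qed.

Lemma frac_eq_sym PQ PQ' : frac_eq sigma delta PQ PQ' -> frac_eq sigma delta PQ' PQ.
Proof. by move=> [u [u' [e1 [e2 e3]]]]; exists u', u; rewrite -e1 -e3. Qed.

Lemma frac_eq_trans PQ1 PQ2 PQ3 :
  frac_eq sigma delta PQ1 PQ2 -> frac_eq sigma delta PQ2 PQ3 -> frac_eq sigma delta PQ1 PQ3.
Proof.
move=> [u1 [u2 [a1 [a2 a3]]]] [v2 [v3 [b1 [b2 b3]]]].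
have v20 : v2 != 0 by apply: contra_neq b2 => ->; rewrite smul0l.
have [mu [nu [mu0 e]]] := common_left_multiple u2 v20.
exists (mu ** u1), (nu ** v3); split; last split.
- by rewrite !smulA a1 -b1 -!smulA e.
- by rewrite smulA smul_neq0.
- by rewrite !smulA a3 -b3 -!smulA e.
Qed.

Lemma minimal_rep_exists P Q : P != 0 -> exists P0 Q0, minimal_rep sigma delta P Q P0 Q0.
Proof.
move=> P0.
have [l [[Q1 eqv] l0 lmin]] :
    exists l, [/\ exists Q1, frac_eq sigma delta (l, Q1) (P, Q), l != 0 &
      forall p, (exists Q1, frac_eq sigma delta (p, Q1) (P, Q)) -> p != 0 -> (size l <= size p)%N].
  apply: (ex_minsize (Pr := fun p => exists Q1, frac_eq sigma delta (p, Q1) (P, Q))).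
  by exists P => //; exists Q, 1, 1; rewrite !smul1l; split => //; split.
have ll : GRing.lreg (lead_coef l)^-1 by apply: lreg_neq0; rewrite invr_eq0 lead_coef_eq0.
exists ((lead_coef l)^-1 *: l), ((lead_coef l)^-1 *: Q1); split.
  by rewrite monicE lead_coef_lreg // mulVr ?K_skewfield ?lead_coef_eq0.
split; last by move=> P1 Q1' P10 eqv'; rewrite lreg_size //; apply: lmin => //; exists Q1'.
apply: frac_eq_trans eqv; exists (lead_coef l)%:P, 1.
by rewrite /= !smulCl !scalerA mulrV ?K_skewfield ?lead_coef_eq0 // !scale1r.
Qed.

Lemma minimal_rep_inv Q : Q \is monic -> minimal_rep sigma delta Q 1 Q 1.
Proof.
move=> mQ; have Q0 := monic_neq0 mQ; split => //; split.
  by exists 1, 1; rewrite smul1l.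
move=> P1 Q1 P10 [u [u' /= [e1 [e2 e3]]]].
have u0 : u != 0 by apply: contra_neq e2 => ->; rewrite smul0l.
move: e1; rewrite smul1r in e3; rewrite -e3 smulA => /(smulI u0) eP1.
have Q10 : Q1 != 0 by apply: contra_neq P10 => Q10; rewrite eP1 Q10 smul0l.
by rewrite eP1 size_smul_ger.
Qed.

(** * The conjugacy class Delta(a) *)

Variable a : K.
Local Notation inD := (inDelta sigma delta a).

Definition rootfree P := P != 0 /\ forall c, inD c -> ev P c != 0.
Definition vanishing P := forall c, inD c -> ev P c = 0.

Lemma inDelta_act c k : inD c -> k != 0 -> inD (act k c).
Proof. by move=> [b [b0 ->]] k0; exists (k * b); rewrite mulr_neq0 // sdactM. Qed.

Lemma inDelta_actV c k : k != 0 -> inD (act k c) -> inD c.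
Proof. by move=> k0 /inDelta_act /(_ (invr_neq0 k0)); rewrite sdactK. Qed.

Inductive Delta_split : {poly K} -> Prop :=
| Delta_split1 : Delta_split 1
| Delta_splitM W e : Delta_split W -> inD e -> Delta_split (('X - e%:P) ** W).

Lemma Delta_split_neq0 W : Delta_split W -> W != 0.
Proof. by elim => [|W' e _ W'0 _]; rewrite ?oner_neq0 // smul_neq0 ?XsubC_neq0. Qed.

Lemma Delta_split_root W c : Delta_split W -> ev W c = 0 -> inD c.
Proof.
elim => [|W' e _ IH inDe]; first by rewrite seval1 => /eqP; rewrite oner_eq0.
rewrite seval_smul /skew_prod; have [/IH // | W'c] := eqVneq (ev W' c) 0.
move/(mulIf_eq0 W'c); rewrite sevalXsubC => /eqP; rewrite subr_eq0 => /eqP ec.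
by apply: (inDelta_actV W'c); rewrite ec.
Qed.

Definition minpoly_Delta f :=
  [/\ Delta_split f, vanishing f & forall p, vanishing p -> rdvds f p].

Lemma Delta_split_extend W c : (forall p, vanishing p -> rdvds W p) ->
  inD c -> ev W c != 0 -> forall p, vanishing p -> rdvds (('X - (act (ev W c) c)%:P) ** W) p.
Proof.
move=> Wdvd inDc Wc p van_p; have [q eq] := Wdvd p van_p.
have : ev q (act (ev W c) c) = 0.
  by apply: (mulIf_eq0 Wc); have := van_p c inDc; rewrite eq seval_smul /skew_prod Wc.
by move/seval_eq0_factor => [q' eq']; exists q'; rewrite eq eq' smulA.
Qed.

(* Starting from 1, multiply by [X - W(c)c] as long as some [c] in Delta(a) is not a root of [W];
   right divisibility of the given annihilating polynomial bounds the number of steps. *)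
Lemma minpoly_Delta_exists : sd_algebraic sigma delta a -> exists f, minpoly_Delta f.
Proof.
move=> [P0 [P00 van0]].
suff grow n W : Delta_split W -> (forall p, vanishing p -> rdvds W p) ->
    (size P0 < size W + n)%N -> exists f, minpoly_Delta f.
  apply: (grow (size P0).+1 1); first exact: Delta_split1.
    by move=> p _; exists p; rewrite smul1r.
  by rewrite addnC ltnS leq_addr.
elim: n W => [|n IH] W sW Wdvd ltP0W.
  by move: ltP0W; rewrite addn0 ltnNge (rdvds_size P00 (Wdvd _ van0)).
have [van_W | ] := classic (vanishing W); first by exists W.
move=> /not_all_ex_not [c nWc]; have [inDc /eqP Wc] := imply_to_and _ _ nWc.
apply: (IH _ (Delta_splitM sW (inDelta_act inDc Wc)) (Delta_split_extend Wdvd inDc Wc)).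
have [-> _] := size_smul (XsubC_neq0 (act (ev W c) c)) (Delta_split_neq0 sW).
by rewrite size_XsubC add2n /= addSnnS.
Qed.

Lemma minpoly_rdvds_mulr f r : minpoly_Delta f -> rdvds f (f ** r).
Proof.
move=> [_ van_f f_dvd]; apply: f_dvd => c inDc; rewrite seval_smul /skew_prod.
by case: ifP => // rc; rewrite van_f ?mul0r //; apply: inDelta_act.
Qed.

Lemma rem_const_of_bezout W g e x y m : x ** W + y ** g = 1 -> ('X - e%:P) ** W = m ** g ->
  forall r, exists k M, r - k *: W = M ** g.
Proof.
move=> bez eW r; have [z1 ez1] := sevalP (r ** x) e.
exists (ev (r ** x) e), (z1 ** m + r ** y).
have er : r = (r ** x - (ev (r ** x) e)%:P) ** W + (ev (r ** x) e) *: W + r ** y ** g.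
  by rewrite smulBl smulCl subrK !smulA -raddfD /= bez smul1r.
by rewrite {1}er addrAC addrK ez1 smulDl !smulA eW.
Qed.

Lemma size_le2_of_rem_const W g : g != 0 ->
  (forall r, exists k M, r - k *: W = M ** g) -> (size g <= 2)%N.
Proof.
move=> g0 rem_const; have [k1 [M1 e1]] := rem_const 1; have [k2 [M2 e2]] := rem_const 'X.
have [k10 | k10] := eqVneq k1 0.
  move: e1; rewrite k10 scale0r subr0 => e1.
  by rewrite (leq_trans (rdvds_size (oner_neq0 _) (ex_intro _ M1 e1))) // size_poly1.
have e3 : (k2 / k1)%:P - 'X = ((k2 / k1) *: M1 - M2) ** g.
  rewrite smulBl smulZl -e1 -e2 scalerBr scalerA divrK ?K_skewfield // -alg_polyC.
  by rewrite opprB addrA subrK.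
have s3 : size ((k2 / k1)%:P - 'X) = 2%N by rewrite -opprB size_polyN size_XsubC.
by rewrite -s3 rdvds_size -?size_poly_gt0 ?s3 //; exists ((k2 / k1) *: M1 - M2).
Qed.

Lemma Delta_split_rdvds_root W g : Delta_split W -> (1 < size g)%N -> rdvds g W ->
  exists2 c, inD c & ev g c = 0.
Proof.
move=> sW; elim: sW g => [|W' e sW' IH inDe] g sg [m eW].
  by have := rdvds_size (oner_neq0 _) (ex_intro _ m eW); rewrite size_poly1 leqNgt sg.
have [[d sd [dW' [q dg]]] | coprime] :=
  classic (exists2 d : {poly K}, (1 < size d)%N & rdvds d W' /\ rdvds d g).
  by have [c inDc dc] := IH d sd dW'; exists c; rewrite // dg seval_smul_eq0.
have g0 : g != 0 by rewrite -size_poly_gt0 ltnW.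
have [x [y bez]] : exists x y, x ** W' + y ** g = 1.
  apply: coprime_bezout (Delta_split_neq0 sW') _ => d dW' dg; rewrite leqNgt.
  by apply/negP => sd; apply: coprime; exists d.
have sg2 : size g = 2%N.
  by apply/anti_leq; rewrite sg (size_le2_of_rem_const g0 (rem_const_of_bezout bez eW)).
have [c gc] := linear_root sg2; exists c => //.
by apply: (Delta_split_root (Delta_splitM sW' inDe)); rewrite eW seval_smul_eq0.
Qed.

Lemma skew_invertible_rootfree P : P != 0 -> skew_invertible sigma delta a (ev P) -> rootfree P.
Proof.
move=> P0 [g inv]; split => // c inDc; have [_] := inv c inDc.
by rewrite /skew_prod; case: eqP => //= _ /eqP; rewrite eq_sym oner_eq0.
Qed.

Lemma defined_at_inv_nonroot Q c : defined_at sigma delta a Q 1 -> inD c -> ev Q c != 0.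
Proof.
move=> [P0 [Q0 [[mP0 [[u [u' /= [e1 [e2 e3]]]] _]] inv]]] inDc.
have u0 : u != 0 by apply: contra_neq e2 => ->; rewrite smul0l.
move: e1; rewrite smul1r in e3; rewrite -e3 smulA => /(smulI u0) eP0.
have [_ P0_rootfree] := skew_invertible_rootfree (monic_neq0 mP0) inv.
by apply: contra_neq (P0_rootfree c inDc) => Qc; rewrite eP0 seval_smul_eq0.
Qed.

Lemma Sa_sub_rootfree S : left_Ore sigma delta S -> irr_factors_defined sigma delta a S ->
  forall P, S P -> rootfree P.
Proof.
move=> [_ [S_neq0 _]] S_irr P SP; split; first exact: S_neq0.
move=> c inDc; apply/negP => /eqP /seval_eq0_factor [Q1 eP].
have := S_irr P SP ('X - c%:P) Q1 1 (monicXsubC c) (XsubC_sirreducible c).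
by rewrite smul1r => /(_ eP) /defined_at_inv_nonroot /(_ inDc); rewrite sevalXsubC subrr eqxx.
Qed.

(** * Root-free polynomials *)

Section MinimalPolynomial.
Variable f : {poly K}.
Hypothesis minpoly_f : minpoly_Delta f.

Lemma rootfree_bezout s : rootfree s -> exists t y, t ** s + y ** f = 1.
Proof.
have [sf _ _] := minpoly_f; move=> [s0 s_rootfree]; apply: coprime_bezout s0 _ => d [q ds] df.
rewrite leqNgt; apply/negP => sd; have [c inDc dc] := Delta_split_rdvds_root sf sd df.
by move: (s_rootfree c inDc); rewrite ds seval_smul_eq0 ?eqxx.
Qed.

(* Modulo [R f], [X^j = (X^j t) s] by Bezout, so the [n = deg f] remainders [X^i s mod f], i < n,
   span the [n] independent monomials [X^j], j < n; hence they are free, whereas a nonzero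
   [x mod f] with [(x mod f) s \in R f] would give a linear relation among them. *)
Lemma minpoly_rdvds_cancel s t y x : t ** s + y ** f = 1 -> rdvds f (x ** s) -> rdvds f x.
Proof.
move=> bez xs; have f0 : f != 0 by case: minpoly_f => /Delta_split_neq0.
set n := (size f).-1; have sf : size f = n.+1 by rewrite prednK // size_poly_gt0.
have sz_md p : (size (srmodp f p) <= n)%N by rewrite -ltnS -sf; case: (srdivmodpP f0 p).
have md_mulr p : srmodp f (p ** s) = srmodp f (srmodp f p ** s).
  have [q fs] := minpoly_rdvds_mulr s minpoly_f.
  by rewrite {1}(proj1 (srdivmodpP f0 p)) smulDl smulA fs -smulA srmodp_addl_mul.
set v := fun i => srmodp f ('X^i ** s).
have md_span p : (size p <= n)%N -> srmodp f (p ** s) = \sum_(i <- Inat n) p`_i *: v i.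
  move=> sp; rewrite {1}(poly_Inat sp) smul_suml srmodp_sum //.
  by apply: eq_bigr => i _; rewrite smulZl srmodpZ.
set A := fun j i => (srmodp f ('X^j ** t))`_i.
have Xn_span j : j \in Inat n -> 'X^j = \sum_(i <- Inat n) A j i *: v i.
  rewrite mem_iota add0n subn0 => ltjn.
  have -> : 'X^j = srmodp f ('X^j ** (t ** s + y ** f)).
    by rewrite bez smul1r srmodp_small // size_polyXn sf.
  rewrite raddfD /= addrC -[X in X + _]smulA srmodp_addl_mul //.
  by rewrite -smulA md_mulr md_span.
apply/srmodp_eq0P => //; set x0 := srmodp f x.
have rel : \sum_(i <- Inat n) x0`_i *: v i = 0.
  by move/(srmodp_eq0P f0): xs; rewrite md_mulr md_span.
apply/eqP/contraT => x00; set i0 := (size x0).-1.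
have n_gt0 : (0 < n)%N by rewrite (leq_trans _ (sz_md x)) // size_poly_gt0.
have i0n : i0 \in Inat n by rewrite mem_iota add0n subn0 leq0n /i0 prednK ?size_poly_gt0 ?sz_md.
have xi0 : x0`_i0 != 0 by rewrite -lead_coefE lead_coef_eq0.
have Xn_span' j : j \in Inat n ->
    'X^j = \sum_(i <- rem i0 (Inat n)) (A j i - A j i0 / x0`_i0 * x0`_i) *: v i.
  by move=> hj; rewrite {1}(Xn_span j hj) (span_drop _ i0n xi0 rel).
have lt_rem : (size (rem i0 (Inat n)) < size (Inat n))%N.
  by rewrite size_rem // /index_iota size_iota subn0 ltn_predL.
have [kk [[j1 hj1 kj1] dep]] := span_dependent (iota_uniq 0 (n - 0)) lt_rem Xn_span'.
by move: kj1; rewrite (monomials_free dep hj1) eqxx.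
Qed.

Lemma rootfree_skew_inverse s : rootfree s ->
  exists t, forall c, inD c -> ev (s ** t) c = 1 /\ ev (t ** s) c = 1.
Proof.
move=> rs; have [t [y bez]] := rootfree_bezout rs; have [_ van_f _] := minpoly_f.
have ts : t ** s = 1 - y ** f by rewrite -bez addrK.
have [q st] : rdvds f (s ** t - 1).
  apply: (minpoly_rdvds_cancel bez); exists (- (s ** y)).
  rewrite smulBl smul1l smulA ts raddfB /= smul1r -smulA smulNl.
  by rewrite addrAC subrr add0r.
exists t => c inDc; split; last by rewrite ts sevalB seval1 seval_smul_eq0 ?van_f ?subr0.
have -> : s ** t = q ** f + 1 by rewrite -st subrK.
by rewrite sevalD seval_smul_eq0 ?van_f // add0r seval1.
Qed.

Lemma rootfree_act_onto s e : rootfree s -> inD e ->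
  exists c, [/\ inD c, ev s c != 0 & act (ev s c) c = e].
Proof.
move=> rs inDe; have [t inv] := rootfree_skew_inverse rs.
have [+ _] := inv e inDe; rewrite seval_smul /skew_prod.
have [_ | td] := eqVneq (ev t e) 0; first by move=> /= /eqP; rewrite eq_sym oner_eq0.
set c := act (ev t e) e => /= std; have sc : ev s c != 0.
  by apply: contra_eq_neq std => ->; rewrite mul0r eq_sym oner_neq0.
by exists c; split => //; [apply: inDelta_act | rewrite /c sdactM // std sdact1].
Qed.

Lemma rootfree_skew_invertible s : rootfree s -> skew_invertible sigma delta a (ev s).
Proof.
move=> rs; have [t inv] := rootfree_skew_inverse rs.
by exists (ev t) => z inDz; rewrite -!seval_smul; apply: inv.
Qed.

Lemma rootfree1 : rootfree 1.
Proof. by split=> [|c _]; rewrite ?oner_neq0 ?seval1 ?oner_neq0. Qed.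

Lemma rootfree_mul s t : rootfree s -> rootfree t -> rootfree (s ** t).
Proof.
move=> [s0 rs] [t0 rt]; split=> [|c inDc]; first exact: smul_neq0.
rewrite seval_smul /skew_prod (rt c inDc) mulr_neq0 ?rt //.
by apply: rs; apply: inDelta_act => //; apply: rt.
Qed.

Lemma rootfree_rdvds s d : rootfree s -> rdvds d s -> rootfree d.
Proof.
move=> [s0 rs] [q es]; split=> [|c inDc]; first by apply: contra_neq s0 => d0; rewrite es d0 raddf0.
by apply: contra_neq (rs c inDc) => dc; rewrite es seval_smul_eq0.
Qed.

Lemma rootfree_lfactor Q Q2 : rootfree (Q ** Q2) -> rootfree Q.
Proof.
move=> rQQ2; have rQ2 : rootfree Q2 by apply: rootfree_rdvds rQQ2 _; exists Q.
have Q0 : Q != 0 by apply: contra_neq rQQ2.1 => ->; rewrite smul0l.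
split=> // e inDe; have [c [inDc Q2c <-]] := rootfree_act_onto rQ2 inDe.
by apply: contra_neq (rQQ2.2 c inDc) => Qe; rewrite seval_smul /skew_prod Q2c Qe mul0r.
Qed.

(* If [(X - c) r0 = m d] with [size r0 < size d], then [m] is a constant, so [(X - c) r0] has no
   root in Delta(a); but either [r0] has one, or [c = r0(e)e] for some [e] by surjectivity. *)
Lemma rootfree_rdvds_XsubC d r c : rootfree d -> inD c -> rdvds d (('X - c%:P) ** r) -> rdvds d r.
Proof.
move=> rd inDc [q2 e2]; have d0 := rd.1.
have [q [r0 [er lt_r0d]]] := rdivp_exists r d0.
have [r00 | r00] := eqVneq r0 0; first by exists q; rewrite er r00 addr0.
set m := q2 - ('X - c%:P) ** q.
have em : ('X - c%:P) ** r0 = m ** d.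
  by rewrite /m smulBl smulA -e2 er raddfD /= addrAC subrr add0r.
have m0 : m != 0 by apply: contra_neq (smul_neq0 (XsubC_neq0 c) r00) => m0; rewrite em m0 smul0l.
have sm : (size m <= 1)%N.
  have [s1 _] := size_smul (XsubC_neq0 c) r00; have [s2 _] := size_smul m0 d0.
  move: s1 s2; rewrite em size_XsubC => -> s2.
  have := size_poly_gt0 d; rewrite d0 => /= sd; rewrite -!subn1 natn in s2.
  (* the sizes are generalized because [lia] would see syntactically different copies of them *)
  by move: s2 lt_r0d sd; move: (size r0) (size m) (size d) => ? ? ?; lia.
have [eC k0] := size1_polyC_neq0 sm m0; set k := m`_0 in eC k0.
have noroot e : inD e -> ev (('X - c%:P) ** r0) e != 0.
  by move=> inDe; rewrite em eC smulCl sevalZ mulr_neq0 ?rd.2.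
have [[e inDe r0e] | r0_rootfree] := classic (exists2 e, inD e & ev r0 e = 0).
  by move: (noroot e inDe); rewrite seval_smul_eq0 ?eqxx.
have [e [inDe r0e ee]] : exists e, [/\ inD e, ev r0 e != 0 & act (ev r0 e) e = c].
  apply: rootfree_act_onto inDc; split => // e inDe; apply/eqP => r0e.
  by apply: r0_rootfree; exists e.
by move: (noroot e inDe); rewrite seval_smul /skew_prod r0e ee sevalXsubC subrr mul0r eqxx.
Qed.

(* A generator of the left ideal [{x | x r \in R s}] has no root [c] in Delta(a): otherwise it would
   right-divide an element of the form [1 - M (X - c)]. *)
Lemma colon_generator_nonroot s r l c : rootfree s -> inD c ->
  (forall x, (exists m, x ** r = m ** s) -> rdvds l x) -> ev l c != 0.
Proof.
move=> rs inDc l_gen; apply/eqP => /seval_eq0_factor [l1 el].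
have [d [al [be [ed d0 [q1 sd] [q2 hd]]]]] := gcrd_exists (('X - c%:P) ** r) rs.1.
have rd : rootfree d by apply: rootfree_rdvds rs _; exists q1.
have [q3 rq3] := rootfree_rdvds_XsubC rd inDc (ex_intro _ q2 hd).
set M := q3 ** be ** ('X - c%:P).
have [z ez] : rdvds l (1 - M).
  apply: l_gen; exists (q3 ** al).
  by rewrite smulBl smul1l /M !smulA -[be ** _]smulA {1}rq3 ed raddfD /= !smulA addrK.
have := congr1 (fun p => ev p c) ez.
rewrite /= el -smulA seval_mulXsubC sevalB seval1 /M seval_mulXsubC subr0.
by move/eqP; rewrite oner_eq0.
Qed.

Lemma rootfree_left_Ore : left_Ore sigma delta rootfree.
Proof.
split; first exact: rootfree1.
split; first by move=> s [].
split; first by move=> s t; apply: rootfree_mul.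
move=> s r rs; set L := fun x => exists m, x ** r = m ** s.
have [mu [nu [mu0 e]]] := common_left_multiple r rs.1.
have [l [[ml eml] l0 lmin]] := ex_minsize (Pr := L) (ex_intro2 _ _ mu (ex_intro _ nu e) mu0).
have l_gen : forall x, L x -> rdvds l x.
  apply: (minsize_rdvds _ _ (ex_intro _ ml eml) l0 lmin) => [x y [mx ex] [my ey] | q x [mx ex]].
    by exists (mx - my); rewrite !smulBl ex ey.
  by exists (q ** mx); rewrite !smulA ex.
exists l, ml; split => //; split => // c inDc.
exact: colon_generator_nonroot rs inDc l_gen.
Qed.

Lemma rootfree_irr_factors_defined : irr_factors_defined sigma delta a rootfree.
Proof.
move=> P rP Q Q1 Q2 mQ _ eP.
have rQ : rootfree Q.
  by apply: (@rootfree_lfactor _ Q2); apply: rootfree_rdvds rP _; exists Q1; rewrite eP smulA.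
by exists Q, 1; split; [exact: minimal_rep_inv | exact: rootfree_skew_invertible rQ].
Qed.

Lemma rootfree_is_Sa : is_Sa sigma delta a rootfree.
Proof.
split; first exact: rootfree_left_Ore.
split; first exact: rootfree_irr_factors_defined.
by move=> S' S'_Ore S'_irr _; apply: Sa_sub_rootfree.
Qed.

Lemma Sa_rootfree S : is_Sa sigma delta a S -> forall P, S P <-> rootfree P.
Proof.
move=> [S_Ore [S_irr S_max]] P; split; first exact: Sa_sub_rootfree.
exact: S_max _ rootfree_left_Ore rootfree_irr_factors_defined (Sa_sub_rootfree S_Ore S_irr) P.
Qed.

(* The minimal denominator of a fraction with a rootfree denominator [P'] right-divides [P']:
   the remainder of the division would be a smaller denominator. *)
Lemma minimal_rep_rootfree P Q P0 Q0 P' Q' : minimal_rep sigma delta P Q P0 Q0 ->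
  rootfree P' -> frac_eq sigma delta (P', Q') (P, Q) -> rootfree P0.
Proof.
move=> [mP0 [eqv0 min0]] rP' eqv.
have [g [g' /= [e1 [e2 e3]]]] := frac_eq_trans eqv (frac_eq_sym eqv0).
have g0 : g != 0 by apply: contra_neq e2 => ->; rewrite smul0l.
have [q [rho [eP' lt_rho]]] := rdivp_exists P' (monic_neq0 mP0).
have [rho0 | rho0] := eqVneq rho 0.
  by apply: rootfree_rdvds rP' _; exists q; rewrite eP' rho0 addr0.
suff : frac_eq sigma delta (rho, Q' - q ** Q0) (P, Q).
  by move/(min0 _ _ rho0); rewrite leqNgt lt_rho.
apply: frac_eq_trans eqv0; exists g, (g' - g ** q) => /=.
have erho : rho = P' - q ** P0 by rewrite eP' addrAC subrr add0r.
split; last split; first by rewrite erho raddfB /= e1 smulBl smulA.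
  exact: smul_neq0.
by rewrite raddfB /= e3 smulBl smulA.
Qed.

Lemma defined_atP P Q : P != 0 ->
  (exists P' Q', rootfree P' /\ frac_eq sigma delta (P', Q') (P, Q)) <->
  defined_at sigma delta a P Q.
Proof.
move=> P0; split=> [[P' [Q' [rP' eqv]]] | [P1 [Q1 [[mP1 [eqv _]] inv]]]].
  have [P1 [Q1 rep]] := minimal_rep_exists Q P0.
  by exists P1, Q1; split => //; apply: rootfree_skew_invertible (minimal_rep_rootfree rep rP' eqv).
by exists P1, Q1; split => //; apply: skew_invertible_rootfree (monic_neq0 mP1) inv.
Qed.
End MinimalPolynomial.
End SkewPolynomials.

Theorem theorem3p10 (K : unitRingType)
  (K_skewfield : forall x : K, x != 0 -> x \is a GRing.unit)
  (sigma : {rmorphism K -> K}) (delta : K -> K)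
  (delta_add : forall x y : K, delta (x + y) = delta x + delta y)
  (delta_mul : forall x y : K, delta (x * y) = sigma x * delta y + delta x * y)
  (a : K) (halg : sd_algebraic sigma delta a) :
  (exists S : {poly K} -> Prop, is_Sa sigma delta a S) /\
  forall S : {poly K} -> Prop, is_Sa sigma delta a S ->
    (forall P : {poly K}, P != 0 ->
       (S P <-> forall c : K, inDelta sigma delta a c -> seval sigma delta P c != 0)) /\
    (forall P Q : {poly K}, P != 0 ->
       ((exists P' Q' : {poly K}, S P' /\ frac_eq sigma delta (P', Q') (P, Q)) <->
        defined_at sigma delta a P Q)).
Proof.
have [f minpoly_f] := minpoly_Delta_exists K_skewfield delta_add delta_mul halg.
split; first by exists (rootfree sigma delta a); exact: rootfree_is_Sa minpoly_f.
move=> S SaS; have S_rootfree := Sa_rootfree K_skewfield delta_add delta_mul minpoly_f SaS.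
split=> [P P0 | P Q P0].
  by rewrite S_rootfree; split=> [[] | ].
rewrite -(defined_atP K_skewfield delta_add delta_mul minpoly_f Q P0).
by split=> -[P' [Q' [SP' eqv]]]; exists P', Q'; rewrite S_rootfree in SP' *.
Qed.
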